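(* Let $(\Psi,\vec u,E)$ be a GCD-to-DIV triple with witnessing variable families $\vec z,\vec y,\vec w$. If $\Psi$ is not in increasing form (for any order), then there is a non-constant polynomial $f$ that is the primitive part of a left-hand side of a divisibility of $\Psi$ such that $M_f(\Psi)\cap\mathbb Z\ne\{0\}$ (here $\mathbb Z$ denotes the constant polynomials). If $\Psi$ is in increasing form, then $\Psi$ is in increasing form for every total order in which all variables of $\vec z$ precede all variables of $\vec y$, which precede all variables of $\vec w$ (i.e. $\Psi$ is $3$-increasing with partition $\vec z,\vec y,\vec w$).
   Context: For integers $a\mid b$ means there is a unique $q$ with $b=qa$. A system of divisibility constraints is $\bigwedge_i f_i\mid g_i$ with linear integer polynomials $f_i\neq0$. A linear polynomial is primitive if non-zero with coefficients and constant having gcd $1$; the primitive part of non-zero $g$ is the primitive $f$ with $g=\gcd(g)f$; $\mathbb Zf=\{bf:b\in\mathbb Z\}$. GCD-to-DIV triple: $(\Psi,\vec u,E)$ such that there are $d,m\in\mathbb N$ and three disjoint families of variables $\vec z,\vec y,\vec w$ with: (1) $\Psi(\vec z,\vec y,\vec w)$ is a system of divisibility constraints in $m$ variables, $\vec u\in\mathbb Z^d$, $E\in\mathbb Z^{d\times m}$, each column of $E$ corresponding to a variable of $\Psi$; (2) each divisibility of $\Psi$ has the form $h(\vec z)\mid f(\vec y)$ or $f(\vec y)\mid g(\vec w)$ with $g$ non-constant, all polynomials have only non-negative coefficients and constants, and every left-hand side has a strictly positive constant; (3) each variable $z$ of $\vec z$ appears in a single polynomial of $\Psi$, which has the form $z+c$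 with $c$ a positive integer and occurs in exactly two divisibilities (as left-hand side); (4) each variable $w$ of $\vec w$ appears in exactly two polynomials, of the forms $w$ and $w+c$ with $c$ a positive integer, each occurring exactly once in $\Psi$ (as right-hand sides); (5) every column of $E$ corresponding to a variable of $\vec z$ or $\vec w$ is zero. For primitive $f$, $M_f(\Psi)$ is the smallest set of linear polynomials containing $f$, closed under integer linear combinations, and such that whenever $g\mid h$ is a constraint of $\Psi$ and $bg\in M_f(\Psi)$ for some $b\in\mathbb Z$, then $bh\in M_f(\Psi)$. For a total order $x_1\preceq\dots\preceq x_n$, $\mathrm{lv}(f)$ is the largest variable with non-zero coefficient; $\Psi$ is in increasing form for $\preceq$ if for every $k$ and primitive $f$ with $\mathrm{lv}(f)=x_k$, $M_f(\Psi)\cap\mathbb Z[x_1,\dots,x_k]=\mathbb Zf$; $\Psi$ is in increasing form if it is so for some total order. *)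

From HB Require Import structures.
From mathcomp Require Import all_boot all_order all_fingroup all_algebra.
Set Implicit Arguments. Unset Strict Implicit. Unset Printing Implicit Defensive.
Import Order.TTheory GRing.Theory Num.Theory.
Local Open Scope ring_scope.

(* A linear integer polynomial in the m variables x_0 .. x_{m-1}:
   (vector of coefficients, constant term).  It is a zmodType, so
   integer linear combinations are available (g *~ b, g + h). *)
Definition lin (m : nat) := ({ffun 'I_m -> int} * int)%type.

Definition coef {m} (p : lin m) (i : 'I_m) : int := p.1 i.
Definition cst {m} (p : lin m) : int := p.2.

Definition linX {m} (i : 'I_m) : lin m := ([ffun j => ((j == i) : nat)%:Z], 0).
Definition linC {m} (c : int) : lin m := (0, c).

Definition nonconstant {m} (p : lin m) : Prop := exists i, coef p i != 0.
Definition is_constant {m} (p : lin m) : Prop := forall i, coef p i = 0.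

Definition vars_in {m} (P : 'I_m -> Prop) (p : lin m) : Prop :=
  forall i, coef p i != 0 -> P i.

Definition lingcd {m} (p : lin m) : int :=
  gcdz (cst p) (\big[gcdz/0]_(i < m) coef p i).

Definition primitive {m} (p : lin m) : Prop := p != 0 /\ lingcd p = 1.

Definition primitive_part_of {m} (f g : lin m) : Prop :=
  g != 0 /\ primitive f /\ g = f *~ lingcd g.

(* A system of divisibility constraints  /\_i f_i | g_i  (pairs (f_i, g_i)) *)
Definition divsys (m : nat) := seq (lin m * lin m).

Definition is_divsys {m} (Psi : divsys m) : Prop :=
  forall e, e \in Psi -> e.1 != 0.

Inductive inM {m} (Psi : divsys m) (f : lin m) : lin m -> Prop :=
| inM_base : inM Psi f f
| inM_zero : inM Psi f 0
| inM_add : forall g h, inM Psi f g -> inM Psi f h -> inM Psi f (g + h)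
| inM_scale : forall (b : int) g, inM Psi f g -> inM Psi f (g *~ b)
| inM_div : forall g h (b : int), (g, h) \in Psi ->
    inM Psi f (g *~ b) -> inM Psi f (h *~ b).

(* A total order on the variables is given by a permutation s:
   s i is the position of variable i, so x_i <= x_j iff s i <= s j. *)
Definition lv_is {m} (s : {perm 'I_m}) (f : lin m) (k : 'I_m) : Prop :=
  coef f k != 0 /\ forall j, coef f j != 0 -> (s j <= s k)%N.

Definition in_prefix {m} (s : {perm 'I_m}) (k : 'I_m) (p : lin m) : Prop :=
  forall j, coef p j != 0 -> (s j <= s k)%N.

Definition increasing_for {m} (Psi : divsys m) (s : {perm 'I_m}) : Prop :=
  forall (k : 'I_m) (f : lin m), primitive f -> lv_is s f k ->
    forall g, (inM Psi f g /\ in_prefix s k g) <-> exists b : int, g = f *~ b.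

Definition increasing_form {m} (Psi : divsys m) : Prop :=
  exists s, increasing_for Psi s.

Definition nonneg_lin {m} (p : lin m) : Prop :=
  (forall i, 0 <= coef p i) /\ 0 <= cst p.

Inductive vkind := VZ | VY | VW.

Definition polys_of {m} (Psi : divsys m) : seq (lin m) :=
  flatten [seq [:: e.1; e.2] | e <- Psi].

(* (Psi, u, E) is a GCD-to-DIV triple, with witnessing families given by
   cls : each variable is in exactly one of z (VZ), y (VY), w (VW). *)
Definition gcd_to_div (d m : nat) (Psi : divsys m) (u : 'cV[int]_d)
    (E : 'M[int]_(d, m)) (cls : 'I_m -> vkind) : Prop :=
  is_divsys Psi /\
  (forall e, e \in Psi ->
     ((vars_in (fun i => cls i = VZ) e.1 /\ vars_in (fun i => cls i = VY) e.2)
      \/ (vars_in (fun i => cls i = VY) e.1 /\ vars_in (fun i => cls i = VW) e.2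
          /\ nonconstant e.2))
     /\ nonneg_lin e.1 /\ nonneg_lin e.2 /\ 0 < cst e.1) /\
  (forall z, cls z = VZ -> exists c : int, 0 < c /\
     (forall q, q \in polys_of Psi -> coef q z != 0 -> q = linX z + linC c) /\
     count (fun e => e.1 == linX z + linC c) Psi = 2%N /\
     count (fun e => e.2 == linX z + linC c) Psi = 0%N) /\
  (forall w, cls w = VW -> exists c : int, 0 < c /\
     (forall q, q \in polys_of Psi -> coef q w != 0 ->
        q = linX w \/ q = linX w + linC c) /\
     count (fun e => e.2 == linX w) Psi = 1%N /\
     count (fun e => e.1 == linX w) Psi = 0%N /\
     count (fun e => e.2 == linX w + linC c) Psi = 1%N /\
     count (fun e => e.1 == linX w + linC c) Psi = 0%N) /\
  (forall j, cls j = VZ \/ cls j = VW -> forall i, E i j = 0).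

From mathcomp Require Import all_boot all_order all_fingroup all_algebra.
From Stdlib Require Import Classical.
Import GRing.Theory Num.Theory.
Local Open Scope ring_scope.
Set Implicit Arguments. Unset Strict Implicit.

(* Call Psi "constant-free at f" when M_f(Psi) contains no non-zero constant.
   The heart of the argument is a graded version of the second claim: if the
   variables carry a rank such that in every constraint g | h the variables of
   h have larger rank than those of g, if Psi is constant-free at the
   primitive part of every non-constant left-hand side, and if the order s
   lists variables by increasing rank, then Psi is increasing for s.  Given f
   with lv(f) = x_k, every element of M_f(Psi) is  a f + r  with r vanishing on
   the variables of rank <= rank x_k (an induction over M_f); for x in
   Z[x_1..x_k] the remainder r is then constant, hence 0.
   Constant-freeness at the left-hand sides propagates to every primitive
   non-constant f, because M_f(Psi) = Zf when f is parallel to no left-hand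
   side.  Conversely, increasing form for any order forces constant-freeness.
   The theorem follows: ranks z < y < w grade a GCD-to-DIV triple, and a
   permutation sorting the variables by rank always exists. *)

Lemma lin_coefMz m (p : lin m) b i : coef (p *~ b) i = coef p i * b.
Proof. by rewrite /coef raddfMz /= ffunMzE mulrzz. Qed.

Lemma lin_cstMz m (p : lin m) b : cst (p *~ b) = cst p * b.
Proof. by rewrite /cst raddfMz mulrzz. Qed.

Lemma lin_coefD m (p q : lin m) i : coef (p + q) i = coef p i + coef q i.
Proof. by rewrite /coef /= ffunE. Qed.

Lemma lin_coef0 m i : coef (0 : lin m) i = 0.
Proof. by rewrite /coef /= ffunE. Qed.

Lemma lin_coefN m (p : lin m) i : coef (- p) i = - coef p i.
Proof. by rewrite /coef /= ffunE. Qed.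

Lemma lin_ext m (p q : lin m) :
  (forall i, coef p i = coef q i) -> cst p = cst q -> p = q.
Proof.
case: p q => [p1 p2] [q1 q2] /= Hcoef; rewrite /cst /= => ->.
by congr pair; apply/ffunP => i; exact: Hcoef.
Qed.

Lemma linMz_eq0 m (p : lin m) b : p *~ b = 0 -> p != 0 -> b = 0.
Proof.
move=> Hpb; apply: contraNeq => nz_b; apply/eqP; apply: lin_ext => [i|].
  have /eqP := congr1 (coef^~ i) Hpb.
  by rewrite lin_coefMz lin_coef0 mulf_eq0 (negbTE nz_b) orbF => /eqP.
have /eqP := congr1 cst Hpb.
by rewrite lin_cstMz mulf_eq0 (negbTE nz_b) orbF => /eqP.
Qed.

Lemma linMz_inj m (p q : lin m) b : p *~ b = q *~ b -> b != 0 -> p = q.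
Proof.
move=> Hpq nz_b; apply/eqP; rewrite -subr_eq0; apply/negPn/negP => nz_pq.
by move/eqP: nz_b; apply; apply: (linMz_eq0 _ nz_pq); rewrite mulrzBl Hpq subrr.
Qed.

Lemma lingcdMz m (p : lin m) c : lingcd (p *~ c) = lingcd p * (`|c|%N)%:Z.
Proof.
rewrite /lingcd lin_cstMz.
have -> : \big[gcdz/0]_(i < m) coef (p *~ c) i
          = (\big[gcdz/0]_(i < m) coef p i) * (`|c|%N)%:Z.
  elim/big_rec2: _ => [|i y1 y2 _ ->]; first by rewrite mul0r.
  by rewrite lin_coefMz mulz_gcdl /gcdz !abszM.
by rewrite mulz_gcdl /gcdz !abszM.
Qed.

Lemma primitive_part_of_parallel m (f g : lin m) a b :
  primitive f -> g != 0 -> g *~ b = f *~ a -> b != 0 ->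
  primitive_part_of f g \/ primitive_part_of (- f) g.
Proof.
move=> [nz_f gcd_f] nz_g Hgf nz_b.
have gcd_ab : lingcd g * (`|b|%N)%:Z = (`|a|%N)%:Z.
  by rewrite -lingcdMz Hgf lingcdMz gcd_f mul1r.
have gcd_ge0 : 0 <= lingcd g by rewrite /lingcd /gcdz.
have : `|a| == `|lingcd g * b|.
  by rewrite normrM (ger0_norm gcd_ge0) -!abszE gcd_ab.
rewrite eqr_norm2 => /orP [] /eqP Ha; [left | right]; do 2!split=> //.
- by apply: (linMz_inj _ nz_b); rewrite Hgf Ha mulrzA.
- by split; [rewrite oppr_eq0 | rewrite -mulrN1z lingcdMz gcd_f].
- by apply: (linMz_inj _ nz_b); rewrite Hgf Ha -mulrzA mulNrz mulrNz.
Qed.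

Lemma vars_in_coef0 m (P : 'I_m -> Prop) p i :
  vars_in P p -> ~ P i -> coef p i = 0.
Proof. by move=> Hp NP; case: (eqVneq (coef p i) 0) => // /Hp /NP. Qed.

Lemma in_prefix_coef0 m (s : {perm 'I_m}) k p i :
  in_prefix s k p -> (s k < s i)%N -> coef p i = 0.
Proof. by move=> Hp ski; apply/eqP; apply: contraTT ski => /Hp; rewrite -leqNgt. Qed.

Lemma lv_exists m (s : {perm 'I_m}) (f : lin m) :
  nonconstant f -> exists k, lv_is s f k.
Proof.
case=> i Hi.
have [k Hk Hmax] :=
  @arg_maxnP _ i (fun j => coef f j != 0) (fun j => nat_of_ord (s j)) Hi.
by exists k.
Qed.

Lemma inM_trans m (Psi : divsys m) f f' x :
  inM Psi f' f -> inM Psi f x -> inM Psi f' x.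
Proof.
move=> Hf; elim=> [||g h _ Hg _ Hh|b g _ Hg|g h b Hgh _ Hg].
- exact: Hf.
- exact: inM_zero.
- exact: inM_add.
- exact: inM_scale.
- exact: inM_div Hgh Hg.
Qed.

Section Decomposition.
Variables (m : nat) (Psi : divsys m) (f : lin m) (R : lin m -> Prop).
Hypothesis R0 : R 0.
Hypothesis RD : forall p q, R p -> R q -> R (p + q).
Hypothesis RZ : forall b p, R p -> R (p *~ b).
Hypothesis R_step : forall g h b a r, (g, h) \in Psi -> R r ->
  g *~ b = f *~ a + r -> inM Psi f (g *~ b) ->
  exists a' r', R r' /\ h *~ b = f *~ a' + r'.

Lemma inM_decomp x : inM Psi f x -> exists a r, R r /\ x = f *~ a + r.
Proof.
elim=> [||g h _ [a1 [r1 [R1 ->]]] _ [a2 [r2 [R2 ->]]]|b g _ [a [r [Rr ->]]]|].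
- by exists 1, 0; rewrite mulr1z addr0.
- by exists 0, 0; rewrite mulr0z addr0.
- by exists (a1 + a2), (r1 + r2); rewrite mulrzDr addrACA; split; first exact: RD.
- by exists (a * b), (r *~ b); rewrite mulrzDl mulrzA; split; first exact: RZ.
- move=> g h b Hgh Hg [a [r [Rr Hgb]]]; exact: R_step Hgh Rr Hgb Hg.
Qed.

End Decomposition.

Definition constant_free m (Psi : divsys m) (f : lin m) : Prop :=
  forall g, inM Psi f g -> is_constant g -> g = 0.

(* Psi is constant-free at the primitive part of each non-constant
   left-hand side: the negation of the first conclusion of the theorem. *)
Definition lhs_constant_free m (Psi : divsys m) : Prop :=
  forall e f, e \in Psi -> nonconstant f -> primitive_part_of f e.1 ->
    constant_free Psi f.

(* When f is parallel to no left-hand side, no constraint ever fires and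
   M_f(Psi) = Zf. *)
Lemma inM_unmatched m (Psi : divsys m) f x :
  is_divsys Psi -> primitive f ->
  ~ (exists e, e \in Psi /\
       (primitive_part_of f e.1 \/ primitive_part_of (- f) e.1)) ->
  inM Psi f x -> exists a, x = f *~ a.
Proof.
move=> Hdiv Pf unmatched Hx.
have R_step : forall g h b a r, (g, h) \in Psi -> r = 0 ->
    g *~ b = f *~ a + r -> inM Psi f (g *~ b) ->
    exists a' r', r' = 0 /\ h *~ b = f *~ a' + r'.
  move=> g h b a r Hgh -> Hgf _; exists 0, 0; split=> //.
  have [-> | nz_b] := eqVneq b 0; first by rewrite !mulr0z addr0.
  case: unmatched; exists (g, h); split=> //.
  apply: (primitive_part_of_parallel Pf _ _ nz_b); first exact: Hdiv Hgh.
  by rewrite Hgf addr0.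
have RD : forall p q : lin m, p = 0 -> q = 0 -> p + q = 0.
  by move=> p q -> ->; rewrite addr0.
have RZ : forall b (p : lin m), p = 0 -> p *~ b = 0 by move=> b p ->; rewrite mul0rz.
have [a [r [-> ->]]] := inM_decomp (R := fun r => r = 0) erefl RD RZ R_step Hx.
by exists a; rewrite addr0.
Qed.

Lemma primitive_constant_free m (Psi : divsys m) f :
  is_divsys Psi -> lhs_constant_free Psi -> primitive f -> nonconstant f ->
  constant_free Psi f.
Proof.
move=> Hdiv Hlhs Pf [i Hi] x Hx Cx.
have [[e [He [Hpp | Hpp]]] | unmatched] :=
  classic (exists e, e \in Psi /\
             (primitive_part_of f e.1 \/ primitive_part_of (- f) e.1)).
- by apply: (Hlhs e f He _ Hpp); first exists i.
- apply: (Hlhs e (- f) He _ Hpp) => //; first by exists i; rewrite lin_coefN oppr_eq0.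
  apply: inM_trans Hx.
  by have := inM_scale (-1) (inM_base Psi (- f)); rewrite mulrN1z opprK.
- have [a Hxa] := inM_unmatched Hdiv Pf unmatched Hx.
  have /eqP := congr1 (coef^~ i) Hxa.
  rewrite Cx lin_coefMz eq_sym mulf_eq0 (negbTE Hi) /= => /eqP a0.
  by rewrite Hxa a0 mulr0z.
Qed.

Lemma increasing_constant_free m (Psi : divsys m) (s : {perm 'I_m}) f :
  increasing_for Psi s -> primitive f -> nonconstant f -> constant_free Psi f.
Proof.
move=> Hinc Pf Nf x Hx Cx.
have [k [Hk Hlv]] := lv_exists s Nf.
have Hpre : in_prefix s k x by move=> j; rewrite Cx eqxx.
have [b Hxb] := (Hinc k f Pf (conj Hk Hlv) x).1 (conj Hx Hpre).
have /eqP := congr1 (coef^~ k) Hxb.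
rewrite Cx lin_coefMz eq_sym mulf_eq0 (negbTE Hk) /= => /eqP b0.
by rewrite Hxb b0 mulr0z.
Qed.

Section Graded.
Variables (m : nat) (Psi : divsys m) (rank : 'I_m -> nat) (s : {perm 'I_m}).
Hypothesis Psi_div : is_divsys Psi.
Hypothesis Psi_lhs : lhs_constant_free Psi.
Hypothesis Psi_graded : forall e, e \in Psi -> exists r : nat,
  vars_in (fun i => rank i <= r)%N e.1 /\ vars_in (fun i => r < rank i)%N e.2.
Hypothesis s_rank : forall i j, (rank i < rank j)%N -> (s i < s j)%N.

(* For f primitive with x_k in its support, every element of M_f(Psi) is a
   multiple of f plus a remainder vanishing on the variables of rank at most
   rank x_k: a constraint whose right-hand side meets these variables has a
   left-hand side of smaller rank, and it cannot fire. *)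
Lemma graded_decomp f k x :
  primitive f -> coef f k != 0 -> inM Psi f x ->
  exists a r, (forall i, (rank i <= rank k)%N -> coef r i = 0) /\ x = f *~ a + r.
Proof.
move=> Pf fk Hx; have Nf : nonconstant f by exists k.
apply: inM_decomp Hx => [i _|p q Hp Hq i Hi|b p Hp i Hi|].
- exact: lin_coef0.
- by rewrite lin_coefD Hp ?Hq ?addr0.
- by rewrite lin_coefMz Hp ?mul0r.
move=> g h b a r Hgh Hr Hgf Hg; have [r0 [Hg_low Hh_high]] := Psi_graded Hgh.
have [k_low | low_k] := leqP (rank k) r0.
  exists 0, (h *~ b); rewrite mulr0z add0r; split=> // i Hi.
  rewrite lin_coefMz (vars_in_coef0 Hh_high) ?mul0r //=.
  by apply/negP; rewrite -leqNgt (leq_trans Hi).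
have a0 : a = 0.
  have /eqP := congr1 (coef^~ k) Hgf.
  rewrite lin_coefD !lin_coefMz Hr // (vars_in_coef0 Hg_low) ?mul0r ?addr0 /=;
    last by apply/negP; rewrite -ltnNge.
  by rewrite eq_sym mulf_eq0 (negbTE fk) => /eqP.
have gb_const : is_constant (g *~ b).
  move=> i; have [Hi | Hi] := leqP (rank i) (rank k).
    by rewrite Hgf a0 mulr0z add0r Hr.
  rewrite lin_coefMz (vars_in_coef0 Hg_low) ?mul0r //=.
  by apply/negP; rewrite -ltnNge (ltn_trans low_k).
have gb0 := primitive_constant_free Psi_div Psi_lhs Pf Nf Hg gb_const.
exists 0, 0; rewrite (linMz_eq0 gb0 (Psi_div Hgh)) !mulr0z addr0.
by split=> // i _; exact: lin_coef0.
Qed.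

Theorem increasing_for_graded : increasing_for Psi s.
Proof.
move=> k f Pf [fk f_pre] x; split; last first.
  case=> b ->; split; first exact: inM_scale (inM_base _ _).
  by move=> j; rewrite lin_coefMz mulf_eq0 negb_or => /andP [/f_pre].
case=> Hx x_pre; have [a [r [Hr Hxr]]] := graded_decomp Pf fk Hx.
exists a; suff r0 : r = 0 by rewrite Hxr r0 addr0.
apply: (primitive_constant_free Psi_div Psi_lhs Pf (ex_intro _ k fk)).
  have -> : r = x + f *~ (- a) by rewrite Hxr mulrNz addrAC subrr add0r.
  exact: inM_add Hx (inM_scale _ (inM_base _ _)).
move=> i; have [Hi | Hi] := leqP (rank i) (rank k); first exact: Hr.
have /eqP := congr1 (coef^~ i) Hxr.
have ski : (s k < s i)%N by exact: s_rank.
rewrite lin_coefD lin_coefMz (in_prefix_coef0 x_pre ski).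
by rewrite (@in_prefix_coef0 _ s k f i f_pre ski) mul0r add0r eq_sym => /eqP.
Qed.

End Graded.

Lemma perm_by_rank m (rank : 'I_m -> nat) :
  exists s : {perm 'I_m}, forall i j, (rank i < rank j)%N -> (s i < s j)%N.
Proof.
pose key (i : 'I_m) := (rank i * m + i)%N.
have key_inj : injective key.
  move=> i j /(congr1 (modn^~ m)); rewrite !modnMDl !modn_small //; exact: val_inj.
have key_rank i j : (rank i < rank j)%N -> (key i < key j)%N.
  move=> Hij; apply: (@leq_trans (rank i * m + m)); first by rewrite ltn_add2l.
  by rewrite -mulSnr (leq_trans _ (leq_addr _ _)) // leq_mul2r Hij orbT.
pose below (i : 'I_m) := [set j | (key j < key i)%N].
have below_lt i : (#|below i| < m)%N.
  have : below i \proper [set: 'I_m].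
    by apply/properP; split; [exact: subsetT | exists i; rewrite ?inE ?ltnn].
  by move/proper_card; rewrite cardsT card_ord.
have below_mono i j : (key i < key j)%N -> (#|below i| < #|below j|)%N.
  move=> Hij; apply: proper_card; apply/properP; split.
    by apply/subsetP => x; rewrite !inE => /ltn_trans; apply.
  by exists i; rewrite !inE ?ltnn.
pose pos (i : 'I_m) : 'I_m := Ordinal (below_lt i).
have pos_inj : injective pos.
  move=> i j /(congr1 val) /= Hij; apply: key_inj.
  by case: (ltngtP (key i) (key j)) => // /below_mono; rewrite Hij ltnn.
by exists (perm pos_inj) => i j /key_rank /below_mono; rewrite !permE.
Qed.

Definition vkind_rank (c : vkind) : nat :=
  match c with VZ => 0 | VY => 1 | VW => 2 end.

Lemma gcd_to_div_graded d m (Psi : divsys m) (u : 'cV[int]_d)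
    (E : 'M[int]_(d, m)) (cls : 'I_m -> vkind) :
  gcd_to_div Psi u E cls -> forall e, e \in Psi -> exists r : nat,
    vars_in (fun i => vkind_rank (cls i) <= r)%N e.1 /\
    vars_in (fun i => r < vkind_rank (cls i))%N e.2.
Proof.
move=> [_ [Hshape _]] e /Hshape [[[Hz Hy] | [Hy [Hw _]]] _].
- by exists 0%N; split=> i; [move/Hz-> | move/Hy->].
- by exists 1%N; split=> i; [move/Hy-> | move/Hw->].
Qed.

Lemma layered_order_rank m (cls : 'I_m -> vkind) (s : {perm 'I_m}) :
  (forall i j, cls i = VZ -> cls j = VY -> (s i < s j)%N) ->
  (forall i j, cls i = VY -> cls j = VW -> (s i < s j)%N) ->
  (forall i j, cls i = VZ -> cls j = VW -> (s i < s j)%N) ->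
  forall i j, (vkind_rank (cls i) < vkind_rank (cls j))%N -> (s i < s j)%N.
Proof.
move=> zy yw zw i j.
by case: (cls i) (cls j) (zy i j) (yw i j) (zw i j) => - []; auto.
Qed.

Unset Implicit Arguments.

Theorem mainTheorem16 (d m : nat) (Psi : divsys m) (u : 'cV[int]_d)
    (E : 'M[int]_(d, m)) (cls : 'I_m -> vkind) :
  gcd_to_div Psi u E cls ->
  (~ increasing_form Psi ->
     exists f : lin m, nonconstant f /\
       (exists e, e \in Psi /\ primitive_part_of f e.1) /\
       (exists g : lin m, inM Psi f g /\ is_constant g /\ g != 0)) /\
  (increasing_form Psi ->
     forall s : {perm 'I_m},
       (forall i j, cls i = VZ -> cls j = VY -> (s i < s j)%N) ->
       (forall i j, cls i = VY -> cls j = VW -> (s i < s j)%N) ->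
       (forall i j, cls i = VZ -> cls j = VW -> (s i < s j)%N) ->
       increasing_for Psi s).
Proof.
move=> G; have Hdiv : is_divsys Psi by case: G.
have Hgraded := gcd_to_div_graded G.
split.
- move=> not_inc; apply: NNPP => no_witness; apply: not_inc.
  have [s s_rank] := perm_by_rank (fun i => vkind_rank (cls i)).
  exists s; apply: increasing_for_graded Hdiv _ Hgraded s_rank.
  move=> e f He Nf Hpp g Hg Cg; apply: NNPP => nz_g; apply: no_witness.
  exists f; split=> //; split; first by exists e.
  by exists g; split=> //; split=> //; apply/eqP.
- move=> [s0 Hs0] s zy yw zw.
  apply: increasing_for_graded Hdiv _ Hgraded (layered_order_rank zy yw zw).
  by move=> e f _ Nf [_ [Pf _]]; exact: increasing_constant_free Hs0 Pf Nf.
Qed.
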